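(* Under the standing assumptions the following identities hold: \begin{align*} Q_{2,j}(a)&=(-1)^j\,\mathbf m_0^{-1}\mathbf l_0^{-1}\mathbf m_1^{-1}\mathbf l_1^{-1}\cdots\mathbf l_{j-1}^{-1}\mathbf m_j^{-1}, && 0\le j\le n-1,\\ \Gamma_{1,j}(a)&=(-1)^j\,\mathbf m_0^{-1}\mathbf l_0^{-1}\mathbf m_1^{-1}\mathbf l_1^{-1}\cdots\mathbf m_{j-1}^{-1}\mathbf l_{j-1}^{-1}, && 1\le j\le n,\\ P_{2,j}(a)&=(-1)^j\,\mathbf m_0^{-1}\mathbf l_0^{-1}\cdots\mathbf l_{j-1}^{-1}\mathbf m_j^{-1}\,(\mathbf m_0+\mathbf m_1+\cdots+\mathbf m_j), && 1\le j\le n-1,\\ \Theta_{1,j}(a)&=(-1)^j\,\mathbf m_0^{-1}\mathbf l_0^{-1}\cdots\mathbf m_{j-1}^{-1}\mathbf l_{j-1}^{-1}\,(s_0+\mathbf l_0+\cdots+\mathbf l_{j-1}), && 1\le j\le n. \end{align*}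
   Context: Let $q,n\in\mathbb N$ and let $a<b$ be real numbers. All matrices are complex; $I_q$, $0_q$ are the $q\times q$ identity and zero matrices. Let $s_0,\dots,s_{2n+1}$ be Hermitian $q\times q$ matrices and set $\widehat s_j:=-ab\,s_j+(a+b)s_{j+1}-s_{j+2}$. Define $H_{1,j}:=(s_{l+k})_{l,k=0}^j$, $H_{2,j}:=(\widehat s_{l+k})_{l,k=0}^{j}$, $K_{1,j}:=(bs_{l+k}-s_{l+k+1})_{l,k=0}^{j}$, $K_{2,j}:=(-as_{l+k}+s_{l+k+1})_{l,k=0}^j$. Standing assumption: $H_{1,n},H_{2,n-1},K_{1,n},K_{2,n}$ are positive definite. Let $T_0:=0_q$ and, for $j\ge1$, let $T_j$ be the $(j+1)\times(j+1)$ block matrix (blocks $q\times q$) with $I_q$ in block positions $(l+1,l)$, $l=0,\dots,j-1$, and $0_q$ elsewhere; $R_j(z):=(I_{(j+1)q}-zT_j)^{-1}$; $v_j:=\mathrm{col}(I_q,0_q,\dots,0_q)\in\mathbb C^{(j+1)q\times q}$. Let $u_{2,0}:=-(a+b)s_0+s_1$, $u_{2,j}:=\mathrm{col}(u_{2,0},-\widehat s_0,\dots,-\widehat s_{j-1})$, $\widetilde u_{1,j}:=\mathrm{col}(s_0,s_1-bs_0,\dots,s_j-bs_{j-1})$; for $j\ge1$, $Y_{2,j}:=\mathrm{col}(\widehat s_j,\dots,\widehat s_{2j-1})$, $\widetilde Y_{1,j}:=\mathrm{col}(bs_j-s_{j+1},\dots,bs_{2j-1}-s_{2j})$. Polynomials: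 $P_{2,0}:=I_q$, $Q_{2,0}(z):=-(u_{2,0}+zs_0)$, $\Gamma_{1,0}:=I_q$, $\Theta_{1,0}:=s_0$; for $j\ge1$: $P_{2,j}(z):=(-Y_{2,j}^*H_{2,j-1}^{-1},I_q)R_j(z)v_j$, $Q_{2,j}(z):=-(-Y_{2,j}^*H_{2,j-1}^{-1},I_q)R_j(z)(u_{2,j}+zv_js_0)$, $\Gamma_{1,j}(z):=(-\widetilde Y_{1,j}^*K_{1,j-1}^{-1},I_q)R_j(z)v_j$, $\Theta_{1,j}(z):=(-\widetilde Y_{1,j}^*K_{1,j-1}^{-1},I_q)R_j(z)\widetilde u_{1,j}$. DSM parameters: $\lambda_j:=(u_{2,j}+av_js_0)^*R_j(a)^*H_{2,j}^{-1}R_j(a)(u_{2,j}+av_js_0)$, $\mu_j:=v_j^*R_j(a)^*K_{1,j}^{-1}R_j(a)v_j$; $\mathbf l_0:=\lambda_0$, $\mathbf l_j:=\lambda_j-\lambda_{j-1}$ ($1\le j\le n-1$); $\mathbf m_0:=\mu_0=(bs_0-s_1)^{-1}$, $\mathbf m_j:=\mu_j-\mu_{j-1}$ ($1\le j\le n$). These matrices are positive definite, in particular invertible. *)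

(* Complex matrices are modelled over an arbitrary
   numClosedFieldType C (e.g. algC); conjugation is Num.conj. *)
From HB Require Import structures.
From mathcomp Require Import all_boot all_order all_algebra.
Set Implicit Arguments. Unset Strict Implicit. Unset Printing Implicit Defensive.
Import Order.TTheory GRing.Theory Num.Theory.
Local Open Scope ring_scope.

Section DSM.
Variable C : numClosedFieldType.

Definition adjmx m k (M : 'M[C]_(m, k)) : 'M[C]_(k, m) := (map_mx Num.conj M)^T.


Definition posdef m (M : 'M[C]_m) : Prop :=
  forall x : 'cV[C]_m, x != 0 -> 0 < (adjmx x *m M *m x) 0 0.

Variables (q : nat) (a b : C) (s : nat -> 'M[C]_q).

Definition bsz (j : nat) : nat := (\sum_(l < j.+1) q)%N.

Lemma bszS j : (bsz j + q)%N = bsz j.+1.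
Proof. by rewrite /bsz [in RHS]big_ord_recr. Qed.

Definition hankel (f : nat -> 'M[C]_q) (j : nat) : 'M[C]_(bsz j) :=
  @mxblock C _ _ (fun _ : 'I_j.+1 => q) (fun _ : 'I_j.+1 => q)
    (fun l k => f (l + k)%N).

Definition bcol (j : nat) (f : nat -> 'M[C]_q) : 'M[C]_(bsz j, q) :=
  @mxcol C _ (fun _ : 'I_j.+1 => q) q (fun l => f (val l)).

Definition shat (j : nat) : 'M[C]_q :=
  (- (a * b)) *: s j + (a + b) *: s j.+1 - s j.+2.

Definition H1 := hankel s.
Definition H2 := hankel shat.
Definition K1 := hankel (fun i => b *: s i - s i.+1).
Definition K2 := hankel (fun i => - a *: s i + s i.+1).

Definition Tmx (j : nat) : 'M[C]_(bsz j) :=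
  @mxblock C _ _ (fun _ : 'I_j.+1 => q) (fun _ : 'I_j.+1 => q)
    (fun l k => if val l == (val k).+1 then 1%:M else 0).

Definition Rmx (j : nat) (z : C) : 'M[C]_(bsz j) :=
  invmx (1%:M - z *: Tmx j).

Definition vv (j : nat) : 'M[C]_(bsz j, q) :=
  bcol j (fun l => if l == 0%N then 1%:M else 0).

Definition u20 : 'M[C]_q := - (a + b) *: s 0 + s 1.

Definition u2 (j : nat) : 'M[C]_(bsz j, q) :=
  bcol j (fun l => if l == 0%N then u20 else - shat l.-1).

Definition ut1 (j : nat) : 'M[C]_(bsz j, q) :=
  bcol j (fun l => if l == 0%N then s 0 else s l - b *: s l.-1).

Definition Y2 (j' : nat) : 'M[C]_(bsz j', q) := bcol j' (fun l => shat (j'.+1 + l)).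
Definition Yt1 (j' : nat) : 'M[C]_(bsz j', q) :=
  bcol j' (fun l => b *: s (j'.+1 + l) - s (j'.+2 + l)).

Definition brow (j' : nat) (Y : 'M[C]_(bsz j', q)) (H : 'M[C]_(bsz j')) :
  'M[C]_(q, bsz j'.+1) :=
  castmx (erefl q, bszS j') (row_mx (- (adjmx Y *m invmx H)) 1%:M).

Definition P2 (j : nat) (z : C) : 'M[C]_q :=
  match j with
  | 0 => 1%:M
  | j'.+1 => brow (Y2 j') (H2 j') *m Rmx j'.+1 z *m vv j'.+1
  end.

Definition Q2 (j : nat) (z : C) : 'M[C]_q :=
  match j with
  | 0 => - (u20 + z *: s 0)
  | j'.+1 => - (brow (Y2 j') (H2 j') *m Rmx j'.+1 z
                 *m (u2 j'.+1 + z *: (vv j'.+1 *m s 0)))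
  end.

Definition Gamma1 (j : nat) (z : C) : 'M[C]_q :=
  match j with
  | 0 => 1%:M
  | j'.+1 => brow (Yt1 j') (K1 j') *m Rmx j'.+1 z *m vv j'.+1
  end.

Definition Theta1 (j : nat) (z : C) : 'M[C]_q :=
  match j with
  | 0 => s 0
  | j'.+1 => brow (Yt1 j') (K1 j') *m Rmx j'.+1 z *m ut1 j'.+1
  end.

Definition lambda (j : nat) : 'M[C]_q :=
  let w := u2 j + a *: (vv j *m s 0) in
  adjmx w *m adjmx (Rmx j a) *m invmx (H2 j) *m Rmx j a *m w.

Definition mu (j : nat) : 'M[C]_q :=
  adjmx (vv j) *m adjmx (Rmx j a) *m invmx (K1 j) *m Rmx j a *m vv j.

Definition lDSM (j : nat) : 'M[C]_q :=
  match j with 0 => lambda 0 | j'.+1 => lambda j'.+1 - lambda j' end.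

Definition mDSM (j : nat) : 'M[C]_q :=
  match j with 0 => mu 0 | j'.+1 => mu j'.+1 - mu j' end.

Fixpoint prodML (j : nat) : 'M[C]_q :=
  match j with
  | 0 => 1%:M
  | j'.+1 => prodML j' *m (invmx (mDSM j') *m invmx (lDSM j'))
  end.

End DSM.

Arguments posdef {C m} M.
Arguments adjmx {C m k} M.

From HB Require Import structures.
From mathcomp Require Import all_boot all_order all_algebra.
From mathcomp Require Import ring zify.
Import Order.TTheory GRing.Theory Num.Theory.
Local Open Scope ring_scope.
Set Implicit Arguments. Unset Strict Implicit. Unset Printing Implicit Defensive.

(* With t_l := b s_l - s_{l+1} one has shat_l = t_{l+1} - a t_l, so K_{1,j}
   and H_{2,j} are the block Hankel matrices of t and of its a-difference.
   At z = a the resolvent R_j(a) = (I - a T_j)^-1 replaces a block column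
   (g_l) by the sums (sum_{k<=l} a^(l-k) g_k), so the four polynomials become
   the rows (-Y^* H^-1, I) -- the coefficients of the monic matrix orthogonal
   polynomials of t and of shat -- applied to the column (a^l I) or to the
   column (t_l).  Splitting off the last block of the Hankel matrices gives
   m_j = G^* D^-1 G and l_j = Q^* E^-1 Q, with G = Gamma_{1,j}(a),
   Q = Q_{2,j}(a) and D, E the Schur complements.  Expanding the moments
   around a by the discrete Taylor formula, orthogonality yields
   Q_{2,j}(a) Gamma_{1,j}(a)^* = D and Gamma_{1,j+1}(a) Q_{2,j}(a)^* = -E,
   hence Q_{2,j}(a) m_j = Gamma_{1,j}(a) and Gamma_{1,j+1}(a) l_j = -Q_{2,j}(a),
   and the products follow by induction on j.  The same orthogonality gives
   P_{2,j}(a) = Q_{2,j}(a) mu_j and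
   Theta_{1,j+1}(a) = Gamma_{1,j+1}(a) (s_0 + lambda_j). *)

Section Adjoint.
Variable C : numClosedFieldType.
Implicit Types m n p : nat.

Lemma adjmxE m n (A : 'M[C]_(m, n)) i j : adjmx A i j = (A j i)^*.
Proof. by rewrite !mxE. Qed.

Lemma adjmxM m n p (A : 'M[C]_(m, n)) (B : 'M[C]_(n, p)) :
  adjmx (A *m B) = adjmx B *m adjmx A.
Proof. by rewrite /adjmx map_mxM trmx_mul. Qed.
Lemma adjmxD m n (A B : 'M[C]_(m, n)) : adjmx (A + B) = adjmx A + adjmx B.
Proof. by rewrite /adjmx map_mxD linearD. Qed.
Lemma adjmxN m n (A : 'M[C]_(m, n)) : adjmx (- A) = - adjmx A.
Proof. by rewrite /adjmx map_mxN linearN. Qed.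
Lemma adjmxB m n (A B : 'M[C]_(m, n)) : adjmx (A - B) = adjmx A - adjmx B.
Proof. by rewrite adjmxD adjmxN. Qed.
Lemma adjmx0 m n : adjmx (0 : 'M[C]_(m, n)) = 0.
Proof. by apply/matrixP => i j; rewrite !mxE rmorph0. Qed.
Lemma adjmxK m n (A : 'M[C]_(m, n)) : adjmx (adjmx A) = A.
Proof. by apply/matrixP => i j; rewrite !mxE conjCK. Qed.
Lemma adjmx1 n : adjmx (1%:M : 'M[C]_n) = 1%:M.
Proof. by rewrite /adjmx map_mx1 trmx1. Qed.
Lemma adjmxZ m n c (A : 'M[C]_(m, n)) : adjmx (c *: A) = c^* *: adjmx A.
Proof. by apply/matrixP => i j; rewrite !mxE rmorphM. Qed.
Lemma adjmx_sum m n (I : finType) (F : I -> 'M[C]_(m, n)) :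
  adjmx (\sum_i F i) = \sum_i adjmx (F i).
Proof.
apply/matrixP => i j; rewrite adjmxE !summxE rmorph_sum.
by apply: eq_bigr => l _; rewrite adjmxE.
Qed.
Lemma adjmx_inv n (A : 'M[C]_n) : adjmx (invmx A) = invmx (adjmx A).
Proof. by rewrite /adjmx map_invmx trmx_inv. Qed.
Lemma unitmx_adj n (A : 'M[C]_n) : (adjmx A \in unitmx) = (A \in unitmx).
Proof. by rewrite /adjmx unitmx_tr map_unitmx. Qed.
Lemma adjmx_col_mx m1 m2 n (A : 'M[C]_(m1, n)) (B : 'M[C]_(m2, n)) :
  adjmx (col_mx A B) = row_mx (adjmx A) (adjmx B).
Proof. by rewrite /adjmx map_col_mx tr_col_mx. Qed.
Lemma adjmx_cast m n m' n' (e : (m = m') * (n = n')) (A : 'M[C]_(m, n)) :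
  adjmx (castmx e A) = castmx (e.2, e.1) (adjmx A).
Proof. by case: e => e1 e2; case: m' / e1; case: n' / e2; rewrite !castmx_id. Qed.

Lemma adjmx_herm n (A : 'M[C]_n) : A \is hermsymmx -> adjmx A = A.
Proof.
move/is_hermitianmxP; rewrite expr0 scale1r => h.
by rewrite /adjmx map_trmx [RHS]h.
Qed.

End Adjoint.

Section BlockInverse.
Variable C : numClosedFieldType.
Implicit Types m n p r : nat.

Lemma mulmx_castmx_inner n m p r (e : n = m) (X : 'M[C]_(p, n)) (Y : 'M[C]_(n, r)) :
  castmx (erefl, e) X *m castmx (e, erefl) Y = X *m Y.
Proof. by case: m / e; rewrite !castmx_id. Qed.
Lemma mulmx_castmx_sq n m r (e : n = m) (X : 'M[C]_(r, n)) (Y : 'M[C]_n) :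
  castmx (erefl, e) X *m castmx (e, e) Y = castmx (erefl, e) (X *m Y).
Proof. by case: m / e; rewrite !castmx_id. Qed.
Lemma invmx_castmx n m (e : n = m) (X : 'M[C]_n) :
  invmx (castmx (e, e) X) = castmx (e, e) (invmx X).
Proof. by case: m / e; rewrite !castmx_id. Qed.
Lemma unitmx_castmx n m (e : n = m) (X : 'M[C]_n) :
  (castmx (e, e) X \in unitmx) = (X \in unitmx).
Proof. by case: m / e; rewrite !castmx_id. Qed.

Section Schur.
Variables (n k : nat) (A : 'M[C]_n) (B : 'M[C]_(n, k)) (c : 'M[C]_k).
Hypothesis unitA : A \in unitmx.
Hypothesis unitM : block_mx A B (adjmx B) c \in unitmx.

Let schur := c - adjmx B *m invmx A *m B.

Lemma schur_unit : schur \in unitmx.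
Proof.
have eM : block_mx A B (adjmx B) c =
   block_mx 1%:M 0 (adjmx B *m invmx A) 1%:M *m block_mx A B 0 schur.
  rewrite mulmx_block !mul1mx !mul0mx !addr0 ?add0r -mulmxA mulVmx // mulmx1.
  by rewrite /schur addrC subrK.
move: unitM; rewrite eM !unitmxE det_mulmx det_lblock det_ublock !det1 !mul1r.
by rewrite unitrM => /andP[].
Qed.

Lemma schur_quadform r (x1 : 'M[C]_(n, r)) (x2 : 'M[C]_(k, r)) : adjmx A = A ->
  adjmx (col_mx x1 x2) *m invmx (block_mx A B (adjmx B) c) *m col_mx x1 x2 =
  adjmx x1 *m invmx A *m x1 +
  adjmx (x2 - adjmx B *m invmx A *m x1) *m invmx schur
    *m (x2 - adjmx B *m invmx A *m x1).
Proof.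
move=> hA; have uS := schur_unit.
set M := block_mx _ _ _ _; set z := invmx M *m col_mx x1 x2.
have hz : M *m z = col_mx x1 x2 by rewrite /z mulmxA mulmxV // mul1mx.
rewrite -(vsubmxK z) in hz; rewrite -mulmxA -/z -(vsubmxK z).
set z1 := usubmx z; set z2 := dsubmx z.
move: hz; rewrite /M mul_block_col => /eq_col_mx [h1 h2].
have ez1 : z1 = invmx A *m (x1 - B *m z2) by rewrite -h1 addrK mulKmx.
have ez2 : z2 = invmx schur *m (x2 - adjmx B *m invmx A *m x1).
  apply: (canRL (mulKmx uS)).
  rewrite -h2 -/z1 -/z2 ez1 /schur mulmxBl !mulmxBr !mulmxA.
  by rewrite -[_ - _ + c *m z2]addrA [RHS]addrC addKr addrC.
rewrite adjmx_col_mx mul_row_col ez1 -[X in _ = _ + X]mulmxA -ez2.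
rewrite adjmxB !adjmxM adjmx_inv hA adjmxK !mulmxBr !mulmxBl !mulmxA.
by rewrite -addrA (addrC (- _)).
Qed.

End Schur.

Lemma posdef_unit n (M : 'M[C]_n) : posdef M -> M \in unitmx.
Proof.
move=> hM; apply: contraT; rewrite unitmxE unitfE negbK => /det0P [v nv vM].
have nx : adjmx v != 0 by apply: contra nv => /eqP h; rewrite -(adjmxK v) h adjmx0.
by have := hM _ nx; rewrite adjmxK vM mul0mx mxE ltxx.
Qed.

Lemma posdef_ulsub n k m (e : (n + k = m)%N) (A : 'M[C]_n) B B' c :
  posdef (castmx (e, e) (block_mx A B B' c)) -> posdef A.
Proof.
case: m / e; rewrite castmx_id => h x nx.
have nz : col_mx x (0 : 'M[C]_(k, 1)) != 0.
  by apply: contra nx; rewrite -col_mx0 => /eqP /eq_col_mx [-> _].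
have := h _ nz; rewrite adjmx_col_mx adjmx0 mul_row_block !mul0mx !addr0 mul_row_col.
by rewrite mulmx0 addr0.
Qed.

End BlockInverse.

Section BlockMatrices.
Variables (C : numClosedFieldType) (q : nat).
Implicit Types (f g : nat -> 'M[C]_q).

(* Unlike [bsz j], which counts [j.+1] blocks, [bdim N] counts [N] blocks, so
   that the empty block matrix is available as the base of recursions. *)
Definition bdim N := (\sum_(l < N) q)%N.

Lemma bdimE N : bdim N = (N * q)%N.
Proof. by rewrite /bdim sum_nat_const card_ord. Qed.

Lemma bdimS N : (bdim N + q)%N = bdim N.+1.
Proof. by rewrite /bdim [in RHS]big_ord_recr. Qed.

Definition bcolmx N f : 'M[C]_(bdim N, q) :=
  @mxcol C N (fun _ => q) q (fun l => f (val l)).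
Definition browmx N f : 'M[C]_(q, bdim N) :=
  @mxrow C N (fun _ => q) q (fun l => f (val l)).
Definition hankelmx f N : 'M[C]_(bdim N) :=
  @mxblock C N N (fun _ => q) (fun _ => q) (fun l k => f (l + k)%N).

Lemma bcolmx_nil f : bcolmx 0 f = 0.
Proof. by apply/mxcolP => -[]. Qed.

Section Indices.
Variables (N : nat) (k : 'I_(bdim N)).

Lemma bdim_idx_q_gt0 : (0 < q)%N.
Proof.
have := ltn_ord k; move: (nat_of_ord k); rewrite bdimE lt0n => i.
by apply: contraTneq => ->; rewrite muln0.
Qed.

Lemma bdim_idx_divq : (k %/ q < N)%N.
Proof. by rewrite ltn_divLR ?bdim_idx_q_gt0 // -bdimE. Qed.

Lemma bdim_idx_modq : (k %% q < q)%N.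
Proof. by rewrite ltn_pmod // bdim_idx_q_gt0. Qed.

Definition blk_ord : 'I_q := Ordinal bdim_idx_modq.

Lemma tagnat_sig_divmod :
  (@tagnat.sig1 N (fun _ => q) k : nat) = (k %/ q)%N /\
  (@tagnat.sig2 N (fun _ => q) k : nat) = (k %% q)%N.
Proof.
have e := @tagnat.rect N (fun _ => q) k.
have lt2 : (tagnat.sig2 k < q)%N := ltn_ord _.
have hs : (\sum_(i < N | (i < tagnat.sig1 k)%N) q = tagnat.sig1 k * q)%N.
  rewrite -(big_ord_widen_cond _ (fun=> true)) ?(ltnW (ltn_ord _)) //=.
  by rewrite sum_nat_const card_ord.
move: e lt2; rewrite hs; move: (tagnat.sig1 k) (tagnat.sig2 k) => x y -> lt2.
by rewrite divnMDl ?bdim_idx_q_gt0 // divn_small // addn0 modnMDl modn_small.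
Qed.

End Indices.

Lemma blk_ord_eq N M (k : 'I_(bdim N)) (k' : 'I_(bdim M)) :
  (k : nat) = k' -> blk_ord k = blk_ord k'.
Proof. by move=> e; apply/val_inj; rewrite /= e. Qed.

Lemma divn_bdimD N (i : 'I_q) : ((bdim N + i) %/ q)%N = N.
Proof. by rewrite bdimE divnMDl ?(leq_ltn_trans _ (ltn_ord i)) // divn_small // addn0. Qed.

Lemma blk_ord_bdimD N M (k : 'I_(bdim M)) (i : 'I_q) :
  (k : nat) = (bdim N + i)%N -> blk_ord k = i.
Proof. by move=> e; apply/val_inj; rewrite /= e bdimE modnMDl modn_small. Qed.

Lemma bcolmxE N f (k : 'I_(bdim N)) i : bcolmx N f k i = f (k %/ q)%N (blk_ord k) i.
Proof.
have [h1 h2] := tagnat_sig_divmod k.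
rewrite mxE; have -> : tagnat.sig1 k = Ordinal (bdim_idx_divq k) by apply/val_inj; rewrite /= h1.
by congr (f _ _ i); apply/val_inj; rewrite /= h2.
Qed.

Lemma browmxE N f i (k : 'I_(bdim N)) : browmx N f i k = f (k %/ q)%N i (blk_ord k).
Proof.
have [h1 h2] := tagnat_sig_divmod k.
rewrite mxE; have -> : tagnat.sig1 k = Ordinal (bdim_idx_divq k) by apply/val_inj; rewrite /= h1.
by congr (f _ i _); apply/val_inj; rewrite /= h2.
Qed.

Lemma hankelmxE f N (k k' : 'I_(bdim N)) :
  hankelmx f N k k' = f (k %/ q + k' %/ q)%N (blk_ord k) (blk_ord k').
Proof.
have [h1 h2] := tagnat_sig_divmod k; have [h1' h2'] := tagnat_sig_divmod k'.
rewrite mxE; have -> : tagnat.sig1 k = Ordinal (bdim_idx_divq k) by apply/val_inj; rewrite /= h1.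
have -> : tagnat.sig1 k' = Ordinal (bdim_idx_divq k') by apply/val_inj; rewrite /= h1'.
by congr (f _ _ _); apply/val_inj; rewrite /= ?h2 ?h2'.
Qed.

Lemma bcolmx_rec N f : bcolmx N.+1 f = castmx (bdimS N, erefl) (col_mx (bcolmx N f) (f N)).
Proof.
apply/matrixP => k i; rewrite castmxE bcolmxE [in RHS]mxE /= cast_ord_id.
case: splitP => k' /= ek; first by rewrite bcolmxE (blk_ord_eq (k' := k')) // ek.
by rewrite ek divn_bdimD (blk_ord_bdimD ek).
Qed.

Lemma browmx_rec N f : browmx N.+1 f = castmx (erefl, bdimS N) (row_mx (browmx N f) (f N)).
Proof.
apply/matrixP => i k; rewrite castmxE browmxE [in RHS]mxE /= cast_ord_id.
case: splitP => k' /= ek; first by rewrite browmxE (blk_ord_eq (k' := k')) // ek.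
by rewrite ek divn_bdimD (blk_ord_bdimD ek).
Qed.

Lemma hankelmx_rec f N : hankelmx f N.+1 = castmx (bdimS N, bdimS N)
  (block_mx (hankelmx f N) (bcolmx N (fun l => f (N + l)%N))
            (browmx N (fun l => f (N + l)%N)) (f (N + N)%N)).
Proof.
apply/matrixP => k k'; rewrite castmxE hankelmxE [in RHS]mxE /=.
case: splitP => kk /= ek; rewrite mxE; case: splitP => kk' /= ek'.
- by rewrite hankelmxE (blk_ord_eq (k' := kk)) // (blk_ord_eq (k := k') (k' := kk')) // ek ek'.
- by rewrite bcolmxE ek' divn_bdimD (blk_ord_bdimD ek') addnC (blk_ord_eq (k' := kk)) // ek.
- by rewrite browmxE ek divn_bdimD (blk_ord_bdimD ek) (blk_ord_eq (k := k') (k' := kk')) // ek'.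
- by rewrite ek ek' !divn_bdimD (blk_ord_bdimD ek) (blk_ord_bdimD ek').
Qed.

Lemma mul_browmx_bcolmx N f g : browmx N f *m bcolmx N g = \sum_(l < N) f l *m g l.
Proof. exact: mul_mxrow_mxcol. Qed.

Lemma mul_browmx_hankelmx N f h :
  browmx N f *m hankelmx h N = browmx N (fun k => \sum_(l < N) f l *m h (l + k)%N).
Proof. exact: mul_mxrow_mxblock. Qed.

Lemma mul_bcolmx_mx N f (M : 'M[C]_q) : bcolmx N f *m M = bcolmx N (fun l => f l *m M).
Proof. exact: mxcol_mul. Qed.

Lemma mul_mx_browmx N f (M : 'M[C]_q) : M *m browmx N f = browmx N (fun l => M *m f l).
Proof. exact: mul_mxrow. Qed.

Lemma eq_browmx N f g : (forall k, (k < N)%N -> f k = g k) -> browmx N f = browmx N g.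
Proof. by move=> h; apply/mxrowP => j; rewrite !mxrowK h ?ltn_ord. Qed.

Lemma eq_bcolmx N f g : (forall k, (k < N)%N -> f k = g k) -> bcolmx N f = bcolmx N g.
Proof. by move=> h; apply/mxcolP => j; rewrite !mxcolK h ?ltn_ord. Qed.

Lemma browmx_inj N f g : browmx N f = browmx N g -> forall k, (k < N)%N -> f k = g k.
Proof.
move=> e k kN; have := congr1 (fun X => @submxrow C N (fun _ => q) q X (Ordinal kN)) e.
by rewrite !mxrowK.
Qed.

(* The blocks of index [l >= N] are [0]. *)
Definition row_blocks N (X : 'M[C]_(q, bdim N)) (l : nat) : 'M[C]_q :=
  if insub l is Some j then @submxrow C N (fun _ => q) q X j else 0.

Lemma row_blocksK N (X : 'M[C]_(q, bdim N)) : browmx N (row_blocks X) = X.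
Proof. by apply/mxrowP => j; rewrite mxrowK /row_blocks valK. Qed.

Lemma browmx0 N : browmx N (fun _ => 0) = 0.
Proof. exact: mxrow0. Qed.
Lemma browmxN N f : browmx N (fun l => - f l) = - browmx N f.
Proof. exact: mxrowN. Qed.
Lemma bcolmxD N f g : bcolmx N (fun l => f l + g l) = bcolmx N f + bcolmx N g.
Proof. exact: mxcolD. Qed.
Lemma bcolmxN N f : bcolmx N (fun l => - f l) = - bcolmx N f.
Proof. exact: mxcolN. Qed.
Lemma scale_bcolmx N (c : C) f : c *: bcolmx N f = bcolmx N (fun l => c *: f l).
Proof. by apply/matrixP => i k; rewrite mxE !bcolmxE mxE. Qed.

Lemma adjmx_bcolmx N f : adjmx (bcolmx N f) = browmx N (fun l => adjmx (f l)).
Proof. by apply/matrixP => i k; rewrite adjmxE bcolmxE browmxE adjmxE. Qed.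

Lemma posdef_hankelmx f M N : posdef (hankelmx f M) -> (N <= M)%N -> posdef (hankelmx f N).
Proof.
elim: M => [|M IH] h; first by rewrite leqn0 => /eqP ->.
rewrite leq_eqVlt => /orP [/eqP -> //|]; rewrite ltnS; apply: IH.
by move: h; rewrite hankelmx_rec => /posdef_ulsub.
Qed.

End BlockMatrices.

Section Resolvent.
Variables (C : numClosedFieldType) (q : nat) (a : C).
Implicit Types (g : nat -> 'M[C]_q).

Lemma unitmx_1subZ_strict_trig n (T : 'M[C]_n) (c : C) :
  is_trig_mx T -> (forall i, T i i = 0) -> 1%:M - c *: T \in unitmx.
Proof.
move=> /is_trig_mxP trigT diagT.
rewrite unitmxE (@det_trig _ _ (1%:M - c *: T)).
  by rewrite big1 ?unitr1 // => i _; rewrite !mxE diagT eqxx mulr0 subr0.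
by apply/is_trig_mxP => i k ik; rewrite !mxE trigT // mulr0 subr0 -val_eqE ltn_eqF.
Qed.

Lemma Tmx_trig j : is_trig_mx (Tmx C q j).
Proof.
apply/is_trig_mxblockP; split => [l k lk|l].
  by rewrite ltn_eqF // (ltn_trans lk).
by rewrite ltn_eqF //; exact: mx0_is_trig.
Qed.

Lemma Tmx_diag j i : Tmx C q j i i = 0.
Proof. by rewrite !mxE ltn_eqF // mxE. Qed.

Lemma mul_Tmx_bcolmx j g :
  Tmx C q j *m bcolmx j.+1 g = bcolmx j.+1 (fun l => if l is l'.+1 then g l' else 0).
Proof.
rewrite /Tmx /bcolmx mul_mxblock_mxrow; apply/eq_mxcolP => -[l hl].
under eq_bigr => k _ do rewrite (fun_if (mulmx^~ _)) mul1mx mul0mx.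
case: l hl => [|l] hl; first by rewrite big1.
rewrite (bigD1 (Ordinal (ltnW hl))) //= eqxx big1 ?addr0 // => k /negPf nk.
by rewrite -val_eqE /= in nk; rewrite eqSS eq_sym nk.
Qed.

Definition geo_cumsum g l := \sum_(k < l.+1) a ^+ (l - k) *: g k.

Lemma geo_cumsum0 g : geo_cumsum g 0 = g 0%N.
Proof. by rewrite /geo_cumsum big_ord1 subnn expr0 scale1r. Qed.

Lemma geo_cumsumS g l : geo_cumsum g l.+1 = a *: geo_cumsum g l + g l.+1.
Proof.
rewrite /geo_cumsum big_ord_recr /= subnn expr0 scale1r scaler_sumr.
congr (_ + _); apply: eq_bigr => k _.
by rewrite scalerA -exprS subSn // -ltnS ltn_ord.
Qed.

Lemma Rmx_bcolmx j g : Rmx q j a *m bcolmx j.+1 g = bcolmx j.+1 (geo_cumsum g).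
Proof.
have e : (1%:M - a *: Tmx C q j) *m bcolmx j.+1 (geo_cumsum g) = bcolmx j.+1 g.
  rewrite mulmxBl mul1mx -scalemxAl mul_Tmx_bcolmx scale_bcolmx -bcolmxN -bcolmxD.
  apply: eq_bcolmx => -[|l] _; first by rewrite geo_cumsum0 scaler0 subr0.
  by rewrite geo_cumsumS addrC addKr.
rewrite -e /Rmx mulKmx //; exact: unitmx_1subZ_strict_trig (Tmx_trig j) (@Tmx_diag j).
Qed.

End Resolvent.

Section MomentShifts.
Variables (C : numClosedFieldType) (q : nat).
Implicit Types (s u g X : nat -> 'M[C]_q).

(* If [s] and [u] are the moments of [σ] and [τ], then [bmom b s] and
   [amom a u] are the moments of [(b - x) σ] and [(x - a) τ]. *)
Definition bmom b s l := b *: s l - s l.+1.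
Definition amom (a : C) u m := u m.+1 - a *: u m.

Lemma shat_amom a b s m : shat a b s m = amom a (bmom b s) m.
Proof. by apply/matrixP => i k; rewrite /shat /amom /bmom !mxE; ring. Qed.

Variable a : C.

Definition apow l : 'M[C]_q := a ^+ l *: 1%:M.

Lemma Rmx_vv j : Rmx q j a *m vv C q j = bcolmx j.+1 apow.
Proof.
rewrite [vv _ _ _](_ : _ = bcolmx j.+1 (fun l => if l == 0%N then 1%:M else 0)) //.
rewrite Rmx_bcolmx; apply: eq_bcolmx => l _; rewrite /apow; elim: l => [|l IH].
  by rewrite geo_cumsum0 expr0 scale1r.
by rewrite geo_cumsumS IH addr0 scalerA -exprS.
Qed.

Lemma Rmx_u2 b s j :
  Rmx q j a *m (u2 a b s j + a *: (vv C q j *m s 0%N)) = - bcolmx j.+1 (bmom b s).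
Proof.
rewrite [u2 _ _ _ _](_ : _ = bcolmx j.+1 (fun l => if l == 0%N then u20 a b s
  else - shat a b s l.-1)) // [vv _ _ _](_ : _ = bcolmx j.+1 (fun l =>
  if l == 0%N then 1%:M else 0)) //.
rewrite mul_bcolmx_mx scale_bcolmx -bcolmxD Rmx_bcolmx -bcolmxN.
apply: eq_bcolmx => l _; elim: l => [|l IH].
  by rewrite geo_cumsum0 mul1mx; apply/matrixP => i k; rewrite /u20 /bmom !mxE; ring.
rewrite geo_cumsumS IH mul0mx scaler0 addr0 shat_amom.
by apply/matrixP => i k; rewrite /amom !mxE; ring.
Qed.

Lemma Rmx_ut1 b s j : Rmx q j a *m ut1 b s j =
  bcolmx j.+1 (fun l => a ^+ l *: s 0%N - \sum_(i < l) a ^+ (l - i.+1) *: bmom b s i).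
Proof.
rewrite [ut1 _ _ _](_ : _ = bcolmx j.+1 (fun l => if l == 0%N then s 0%N
  else s l - b *: s l.-1)) // Rmx_bcolmx.
apply: eq_bcolmx => l _; elim: l => [|l IH].
  by rewrite geo_cumsum0 big_ord0 expr0 scale1r subr0.
rewrite geo_cumsumS IH big_ord_recr /= subnn expr0 scale1r scalerBr scalerA -exprS.
rewrite scaler_sumr (eq_bigr (fun i : 'I_l => a ^+ (l.+1 - i.+1) *: bmom b s i)).
  by apply/matrixP => i k; rewrite /bmom !mxE; ring.
by move=> i _; rewrite scalerA -exprS subSn // ltn_ord.
Qed.

Lemma adjmx_amom u m : a \is Num.real ->
  adjmx (u m) = u m -> adjmx (u m.+1) = u m.+1 -> adjmx (amom a u m) = amom a u m.
Proof. by move=> ha h1 h2; rewrite /amom adjmxB adjmxZ conj_Creal // h1 h2. Qed.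

Lemma amom_telescope u k l :
  \sum_(i < l) a ^+ (l - i.+1) *: amom a u (i + k) = u (l + k)%N - a ^+ l *: u k.
Proof.
elim: l => [|l IH]; first by rewrite big_ord0 expr0 scale1r subrr.
rewrite big_ord_recr /= subnn expr0 scale1r.
rewrite (eq_bigr (fun i : 'I_l => a *: (a ^+ (l - i.+1) *: amom a u (i + k)))); last first.
  by move=> i _; rewrite scalerA -exprS subSn // ltn_ord.
rewrite -scaler_sumr IH /amom addSn exprS -scalerA.
by rewrite scalerBr addrC addrA subrK.
Qed.

Definition geo_tail g M i := \sum_(i.+1 <= l < M) a ^+ (l - i.+1) *: g l.

Lemma geo_tail_last g M : geo_tail g M.+2 M = g M.+1.
Proof. by rewrite /geo_tail big_nat1 subnn expr0 scale1r. Qed.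

Lemma geo_tail_ge g M i : (M <= i.+1)%N -> geo_tail g M i = 0.
Proof. by move=> h; rewrite /geo_tail big_geq. Qed.

Lemma sum_triangle (V : zmodType) M (F : nat -> nat -> V) :
  \sum_(l < M) \sum_(i < l) F l i = \sum_(i < M) \sum_(i.+1 <= l < M) F l i.
Proof.
elim: M => [|M IH]; first by rewrite !big_ord0.
rewrite big_ord_recr IH /= [RHS]big_ord_recr /= big_geq // addr0.
by rewrite -big_split /=; apply: eq_bigr => i _; rewrite [in RHS]big_nat_recr.
Qed.

Lemma sum_geo_tailL g X M :
  \sum_(l < M) g l *m (\sum_(i < l) a ^+ (l - i.+1) *: X i) =
  \sum_(i < M) geo_tail g M i *m X i.
Proof.
under eq_bigr => l _ do rewrite mulmx_sumr.
rewrite (sum_triangle M (fun l i => g l *m (a ^+ (l - i.+1) *: X i))).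
apply: eq_bigr => i _; rewrite /geo_tail mulmx_suml; apply: eq_bigr => l _.
by rewrite -scalemxAr scalemxAl.
Qed.

Lemma sum_geo_tailR g X M :
  \sum_(l < M) (\sum_(i < l) a ^+ (l - i.+1) *: X i) *m g l =
  \sum_(i < M) X i *m geo_tail g M i.
Proof.
under eq_bigr => l _ do rewrite mulmx_suml.
rewrite (sum_triangle M (fun l i => (a ^+ (l - i.+1) *: X i) *m g l)).
apply: eq_bigr => i _; rewrite /geo_tail mulmx_sumr; apply: eq_bigr => l _.
by rewrite -scalemxAl scalemxAr.
Qed.

Lemma moment_taylorL g u M k :
  \sum_(l < M) g l *m u (l + k)%N - (\sum_(l < M) a ^+ l *: g l) *m u k =
  \sum_(i < M) geo_tail g M i *m amom a u (i + k).
Proof.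
rewrite -(sum_geo_tailL g (fun i => amom a u (i + k))) mulmx_suml -sumrB; apply: eq_bigr => l _.
by rewrite amom_telescope mulmxBr -scalemxAr scalemxAl.
Qed.

Lemma moment_taylorR g u M k :
  \sum_(l < M) u (l + k)%N *m g l - u k *m (\sum_(l < M) a ^+ l *: g l) =
  \sum_(i < M) amom a u (i + k) *m geo_tail g M i.
Proof.
rewrite -(sum_geo_tailR g (fun i => amom a u (i + k))) mulmx_sumr -sumrB; apply: eq_bigr => l _.
by rewrite amom_telescope mulmxBl -scalemxAl scalemxAr.
Qed.

End MomentShifts.

Definition herm_upto (C : numClosedFieldType) q (f : nat -> 'M[C]_q) m :=
  forall k, (k <= m)%N -> adjmx (f k) = f k.

Section MonicOrthogonal.
Variables (C : numClosedFieldType) (q : nat) (f : nat -> 'M[C]_q) (N : nat).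
Implicit Types (x z : nat -> 'M[C]_q).

Definition hankel_border := bcolmx N (fun l => f (N + l)%N).
Definition hankel_schur :=
  f (N + N)%N - adjmx hankel_border *m invmx (hankelmx f N) *m hankel_border.

(* [opoly_row] is the row [(-Y^* H^-1, I)] of the paper; its blocks
   [opoly_coef l] are the coefficients of the monic matrix polynomial of
   degree [N] orthogonal with respect to the moments [f]. *)
Definition opoly_head : 'M[C]_(q, bdim q N) :=
  - (adjmx hankel_border *m invmx (hankelmx f N)).
Definition opoly_row : 'M[C]_(q, bdim q N.+1) :=
  castmx (erefl, bdimS q N) (row_mx opoly_head 1%:M).
Definition opoly_coef l :=
  if (l < N)%N then row_blocks opoly_head l else if l == N then 1%:M else 0.

Lemma opoly_coef_lead : opoly_coef N = 1%:M.
Proof. by rewrite /opoly_coef ltnn eqxx. Qed.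

Lemma opoly_rowE : opoly_row = browmx N.+1 opoly_coef.
Proof.
rewrite browmx_rec opoly_coef_lead /opoly_row; congr (castmx _ (row_mx _ _)).
by rewrite -[LHS]row_blocksK; apply: eq_browmx => k kN; rewrite /opoly_coef kN.
Qed.

Lemma opoly_row_bcolmx x :
  opoly_row *m bcolmx N.+1 x = x N - adjmx hankel_border *m invmx (hankelmx f N) *m bcolmx N x.
Proof.
rewrite /opoly_row bcolmx_rec mulmx_castmx_inner mul_row_col mul1mx.
by rewrite /opoly_head mulNmx addrC.
Qed.

Hypothesis herm_f : herm_upto f (N + N).

Lemma adjmx_hankelmx : adjmx (hankelmx f N) = hankelmx f N.
Proof.
apply/matrixP => k k'; rewrite adjmxE !hankelmxE.
have hm : (k' %/ q + k %/ q <= N + N)%N by rewrite leq_add // ltnW // bdim_idx_divq.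
by have /matrixP/(_ (blk_ord k) (blk_ord k')) := herm_f hm; rewrite adjmxE addnC => ->.
Qed.

Lemma adjmx_hankel_border : adjmx hankel_border = browmx N (fun l => f (N + l)%N).
Proof.
rewrite /hankel_border adjmx_bcolmx; apply: eq_browmx => l lN.
by apply: herm_f; rewrite leq_add2l ltnW.
Qed.

Lemma adjmx_hankel_schur : adjmx hankel_schur = hankel_schur.
Proof.
rewrite /hankel_schur adjmxB !adjmxM adjmx_inv adjmx_hankelmx adjmxK herm_f //.
by rewrite mulmxA.
Qed.

Hypothesis unitH : hankelmx f N \in unitmx.

Lemma opoly_row_hankelmx :
  opoly_row *m hankelmx f N.+1 = castmx (erefl, bdimS q N) (row_mx 0 hankel_schur).
Proof.
rewrite /opoly_row hankelmx_rec mulmx_castmx_sq mul_row_block mul1mx.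
rewrite -adjmx_hankel_border -/hankel_border /opoly_head mulNmx -mulmxA mulVmx //.
by rewrite mulmx1 addNr /hankel_schur mulNmx mul1mx addrC.
Qed.

Lemma opoly_moments k : (k <= N)%N ->
  \sum_(l < N.+1) opoly_coef l *m f (l + k)%N = if (k < N)%N then 0 else hankel_schur.
Proof.
have := opoly_row_hankelmx; rewrite opoly_rowE mul_browmx_hankelmx.
have -> : castmx (erefl, bdimS q N) (row_mx (0 : 'M[C]_(q, bdim q N)) hankel_schur) =
    browmx N.+1 (fun k => if (k < N)%N then 0 else hankel_schur).
  rewrite browmx_rec ltnn; congr (castmx _ (row_mx _ _)).
  by rewrite -(browmx0 C q N); apply: eq_browmx => k' ->.
by move/browmx_inj => h kN; apply: h.
Qed.

Lemma opoly_orth k : (k < N)%N -> \sum_(l < N.+1) opoly_coef l *m f (l + k)%N = 0.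
Proof. by move=> kN; rewrite opoly_moments ?kN // ltnW. Qed.

Lemma opoly_norm : \sum_(l < N.+1) opoly_coef l *m f (l + N)%N = hankel_schur.
Proof. by rewrite opoly_moments // ltnn. Qed.

Lemma opoly_orth_uniq z :
  (forall k, (k < N)%N -> \sum_(l < N.+1) z l *m f (l + k)%N = 0) ->
  forall l, (l < N.+1)%N -> z l = z N *m opoly_coef l.
Proof.
move=> hz; pose d l := z l - z N *m opoly_coef l.
have hd k : (k < N)%N -> \sum_(l < N) d l *m f (l + k)%N = 0.
  move=> kN; have : \sum_(l < N.+1) d l *m f (l + k)%N = 0.
    under eq_bigr do rewrite mulmxBl -mulmxA.
    by rewrite sumrB -mulmx_sumr opoly_orth // mulmx0 subr0 hz.
  by rewrite big_ord_recr /= /d opoly_coef_lead mulmx1 subrr mul0mx addr0.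
have : browmx N d *m hankelmx f N = 0.
  by rewrite mul_browmx_hankelmx -(browmx0 C q N); apply: eq_browmx => k kN; rewrite hd.
move/(canRL (mulmxK unitH)); rewrite mul0mx -(browmx0 C q N) => /browmx_inj hd0.
move=> l; rewrite ltnS leq_eqVlt => /orP [/eqP -> | lN].
  by rewrite opoly_coef_lead mulmx1.
by apply/eqP; rewrite -subr_eq0 -/(d l) hd0.
Qed.

Hypothesis unitHS : hankelmx f N.+1 \in unitmx.

Lemma unitmx_hankel_schur : hankel_schur \in unitmx.
Proof.
move: unitHS; rewrite hankelmx_rec unitmx_castmx -adjmx_hankel_border.
exact: schur_unit.
Qed.

Lemma inv_hankelmx_quad_rec x :
  adjmx (bcolmx N.+1 x) *m invmx (hankelmx f N.+1) *m bcolmx N.+1 x =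
  adjmx (bcolmx N x) *m invmx (hankelmx f N) *m bcolmx N x +
  adjmx (opoly_row *m bcolmx N.+1 x) *m invmx hankel_schur *m (opoly_row *m bcolmx N.+1 x).
Proof.
have := unitHS; rewrite opoly_row_bcolmx !hankelmx_rec bcolmx_rec unitmx_castmx.
rewrite -adjmx_hankel_border => uM.
rewrite adjmx_cast invmx_castmx /= mulmx_castmx_sq mulmx_castmx_inner.
by rewrite schur_quadform // adjmx_hankelmx.
Qed.

End MonicOrthogonal.

Section OrthogonalPairs.
Variables (C : numClosedFieldType) (q : nat) (a : C).
Hypothesis a_real : a \is Num.real.
Implicit Types (g u gm et : nat -> 'M[C]_q).

Definition peval g N := \sum_(l < N.+1) a ^+ l *: g l.

Lemma adjmx_peval g N : adjmx (peval g N) = peval (fun l => adjmx (g l)) N.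
Proof.
rewrite adjmx_sum; apply: eq_bigr => l _.
by rewrite adjmxZ conj_Creal // rpredX.
Qed.

Lemma mul_browmx_apow g N : browmx N.+1 g *m bcolmx N.+1 (apow q a) = peval g N.
Proof.
rewrite mul_browmx_bcolmx; apply: eq_bigr => l _.
by rewrite /apow -scalemxAr mulmx1.
Qed.

Lemma moment_mul_adj_peval gm et u N :
  et N = 1%:M ->
  (forall k, (k < N)%N -> \sum_(l < N.+1) gm l *m u (l + k)%N = 0) ->
  (forall k, (k < N)%N -> \sum_(l < N.+1) et l *m amom a u (l + k)%N = 0) ->
  herm_upto u (N + N) ->
  (\sum_(l < N.+1) et l *m u l) *m adjmx (peval gm N) =
  adjmx (\sum_(l < N.+1) gm l *m u (l + N)%N).
Proof.
move=> eN og oe hu; rewrite adjmx_peval mulmx_suml.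
set g' := fun l => adjmx (gm l).
have adj_moment l : (l <= N)%N ->
    adjmx (\sum_(m < N.+1) gm m *m u (m + l)%N) = \sum_(m < N.+1) u (m + l)%N *m g' m.
  move=> lN; rewrite adjmx_sum; apply: eq_bigr => m _; rewrite adjmxM hu //.
  by rewrite leq_add // -ltnS.
have taylor l : u l *m peval g' N = \sum_(m < N.+1) u (m + l)%N *m g' m -
    \sum_(i < N.+1) amom a u (i + l) *m geo_tail a g' N.+1 i.
  by rewrite -(moment_taylorR a g' u N.+1 l) subKr.
under eq_bigr => l _ do rewrite -mulmxA taylor mulmxBr.
(* The Taylor remainders are killed by the orthogonality of [et], the main
   terms by that of [gm]. *)
rewrite sumrB.
have -> : \sum_(l < N.+1) et l *m (\sum_(i < N.+1) amom a u (i + l) *m geo_tail a g' N.+1 i) = 0.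
  under eq_bigr => l _ do rewrite mulmx_sumr.
  rewrite exchange_big /= big_ord_recr /= geo_tail_ge //.
  rewrite [X in _ + X]big1 ?addr0 => [|l _]; last by rewrite !mulmx0.
  rewrite big1 // => i _.
  under eq_bigr => l _ do rewrite mulmxA addnC.
  by rewrite -mulmx_suml oe ?mul0mx.
rewrite subr0 big_ord_recr /= eN mul1mx -adj_moment // big1 ?add0r // => l _.
by rewrite -adj_moment ?og ?adjmx0 ?mulmx0 // ltnW.
Qed.

Lemma peval_mul_adj_moment gm et u N :
  gm N.+1 = 1%:M ->
  (forall k, (k < N.+1)%N -> \sum_(l < N.+2) gm l *m u (l + k)%N = 0) ->
  (forall k, (k < N)%N -> \sum_(l < N.+1) et l *m amom a u (l + k)%N = 0) ->
  herm_upto u (N + N).+1 ->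
  peval gm N.+1 *m adjmx (\sum_(k < N.+1) et k *m u k) =
  - adjmx (\sum_(k < N.+1) et k *m amom a u (k + N)%N).
Proof.
move=> gN og oe hu.
have hd m : (m <= N + N)%N -> adjmx (amom a u m) = amom a u m.
  by move=> hm; apply: adjmx_amom => //; apply: hu; rewrite ?ltnS // ltnW.
rewrite adjmx_sum mulmx_sumr.
rewrite (eq_bigr (fun k : 'I_N.+1 => - ((\sum_(i < N.+2) geo_tail a gm N.+2 i *m
    amom a u (i + k)) *m adjmx (et k)))); last first.
  move=> k _; rewrite adjmxM hu; last by rewrite (leq_trans (ltnW (ltn_ord k))) // ltnS leq_addl.
  by rewrite mulmxA -(moment_taylorL a gm u N.+2 k) og ?ltn_ord // sub0r mulNmx opprK.
rewrite sumrN; congr (- _).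
under eq_bigr => k _ do rewrite mulmx_suml.
rewrite exchange_big /= big_ord_recr /= geo_tail_ge //.
rewrite [X in _ + X]big1 ?addr0 => [|k _]; last by rewrite !mul0mx.
rewrite big_ord_recr /= geo_tail_last gN big1 ?add0r => [|i _].
  rewrite adjmx_sum; apply: eq_bigr => k _.
  by rewrite mul1mx adjmxM addnC hd // leq_add2r -ltnS ltn_ord.
under eq_bigr => k _ do rewrite -mulmxA.
rewrite -mulmx_sumr.
have -> : \sum_(k < N.+1) amom a u (i + k)%N *m adjmx (et k) =
    adjmx (\sum_(k < N.+1) et k *m amom a u (k + i)%N).
  rewrite adjmx_sum; apply: eq_bigr => k _; rewrite adjmxM addnC hd //.
  by rewrite leq_add // ?(ltnW (ltn_ord i)) // -ltnS ltn_ord.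
by rewrite oe ?adjmx0 ?mulmx0.
Qed.

Variables (u f : nat -> 'M[C]_q) (N : nat).
Hypothesis f_amom : forall m, f m = amom a u m.

Lemma opoly_apow_factor :
  herm_upto f (N + N) -> hankelmx f N \in unitmx -> hankelmx u N.+1 \in unitmx ->
  opoly_row f N *m bcolmx N.+1 (apow q a) =
  (opoly_row f N *m bcolmx N.+1 u) *m
  (adjmx (bcolmx N.+1 (apow q a)) *m invmx (hankelmx u N.+1) *m bcolmx N.+1 (apow q a)).
Proof.
move=> hf uH uK.
(* [r] is orthogonal to the moments of [f], hence a left multiple of [opoly_row f N]. *)
set r := adjmx (bcolmx N.+1 (apow q a)) *m invmx (hankelmx u N.+1).
set z := row_blocks r.
have rz : browmx N.+1 z = r by rewrite row_blocksK.
have h1 : browmx N.+1 z *m hankelmx u N.+1 = browmx N.+1 (apow q a).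
  rewrite rz /r -mulmxA mulVmx // mulmx1 adjmx_bcolmx; apply: eq_browmx => l _.
  by rewrite /apow adjmxZ adjmx1 conj_Creal // rpredX.
rewrite mul_browmx_hankelmx in h1; have h2 := browmx_inj h1.
have h3 k : (k < N)%N -> \sum_(l < N.+1) z l *m f (l + k)%N = 0.
  move=> kN; under eq_bigr => l _ do rewrite f_amom /amom mulmxBr -scalemxAr -addnS.
  have kN1 : (k < N.+1)%N by rewrite ltnS ltnW.
  by rewrite sumrB -scaler_sumr h2 // h2 // /apow scalerA -exprS subrr.
have rz2 : r = z N *m opoly_row f N.
  by rewrite -rz opoly_rowE mul_mx_browmx; apply: eq_browmx => l lN; exact: opoly_orth_uniq.
have /mulmx1C h6 : z N *m (opoly_row f N *m bcolmx N.+1 u) = 1%:M.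
  rewrite mulmxA -rz2 -rz mul_browmx_bcolmx.
  have := h2 0%N isT; rewrite /apow expr0 scale1r => <-.
  by apply: eq_bigr => l _; rewrite addn0.
by rewrite rz2 -(mulmxA (z N)) mulmxA h6 mul1mx.
Qed.

Lemma opoly_cumsum_factor (s0 : 'M[C]_q) :
  herm_upto u (N + N) -> hankelmx u N \in unitmx -> hankelmx f N \in unitmx ->
  opoly_row u N *m
    bcolmx N.+1 (fun l => a ^+ l *: s0 - \sum_(i < l) a ^+ (l - i.+1) *: u i) =
  (opoly_row u N *m bcolmx N.+1 (apow q a)) *m
    (s0 + adjmx (bcolmx N u) *m invmx (hankelmx f N) *m bcolmx N u).
Proof.
move=> hu uK uH.
rewrite opoly_rowE mul_browmx_apow mul_browmx_bcolmx.
set g := opoly_coef u N.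
under eq_bigr => l _ do rewrite mulmxBr.
rewrite sumrB sum_geo_tailL.
have -> : \sum_(i < N.+1) g i *m (a ^+ i *: s0) = peval g N *m s0.
  by rewrite mulmx_suml; apply: eq_bigr => l _; rewrite -scalemxAr scalemxAl.
rewrite big_ord_recr /= geo_tail_ge // mul0mx addr0.
have hr : browmx N (geo_tail a g N.+1) *m hankelmx f N = - (peval g N *m adjmx (bcolmx N u)).
  rewrite mul_browmx_hankelmx adjmx_bcolmx mul_mx_browmx -browmxN.
  apply: eq_browmx => k kN; have := moment_taylorL a g u N.+1 k.
  rewrite opoly_orth // -/(peval g N) big_ord_recr /= geo_tail_ge // mul0mx addr0 => e.
  rewrite hu; last by rewrite (leq_trans (ltnW kN)) // leq_addr.
  by under eq_bigr => i _ do rewrite f_amom; rewrite -e sub0r.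
rewrite -mul_browmx_bcolmx (canRL (mulmxK uH) hr).
by rewrite mulmxDr !mulNmx opprK !mulmxA.
Qed.

End OrthogonalPairs.

Section EvaluationAtA.
Variables (C : numClosedFieldType) (q : nat) (a b : C) (s : nat -> 'M[C]_q).
Local Notation t := (bmom b s).
Local Notation sh := (shat a b s).

Lemma opoly_row0_bcolmx (f g : nat -> 'M[C]_q) : opoly_row f 0 *m bcolmx 1 g = g 0%N.
Proof. by rewrite opoly_row_bcolmx bcolmx_nil mulmx0 subr0. Qed.

Lemma brow_bmom j : brow (Yt1 b s j) (K1 b s j) = opoly_row t j.+1.
Proof. exact: eq_castmx. Qed.

Lemma brow_shat j : brow (Y2 a b s j) (H2 a b s j) = opoly_row sh j.+1.
Proof. exact: eq_castmx. Qed.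

Lemma Gamma1_opoly N : Gamma1 b s N a = opoly_row t N *m bcolmx N.+1 (apow q a).
Proof.
case: N => [|j]; first by rewrite opoly_row0_bcolmx /apow expr0 scale1r.
by rewrite /Gamma1 brow_bmom -mulmxA Rmx_vv.
Qed.

Lemma P2_opoly N : P2 a b s N a = opoly_row sh N *m bcolmx N.+1 (apow q a).
Proof.
case: N => [|j]; first by rewrite opoly_row0_bcolmx /apow expr0 scale1r.
by rewrite /P2 brow_shat -mulmxA Rmx_vv.
Qed.

Lemma Q2_opoly N : Q2 a b s N a = opoly_row sh N *m bcolmx N.+1 t.
Proof.
case: N => [|j].
  by rewrite opoly_row0_bcolmx /Q2 /u20 /bmom; apply/matrixP => i k; rewrite !mxE; ring.
by rewrite /Q2 brow_shat -mulmxA Rmx_u2 mulmxN opprK.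
Qed.

Lemma Theta1_opoly N : Theta1 b s N a =
  opoly_row t N *m bcolmx N.+1 (fun l => a ^+ l *: s 0%N - \sum_(i < l) a ^+ (l - i.+1) *: t i).
Proof.
case: N => [|j]; first by rewrite opoly_row0_bcolmx big_ord0 expr0 scale1r subr0.
by rewrite /Theta1 brow_bmom -mulmxA Rmx_ut1.
Qed.

Lemma mu_quad N :
  mu a b s N = adjmx (bcolmx N.+1 (apow q a)) *m invmx (hankelmx t N.+1) *m bcolmx N.+1 (apow q a).
Proof. by rewrite /mu -adjmxM -mulmxA Rmx_vv. Qed.

Lemma lambda_quad N :
  lambda a b s N = adjmx (bcolmx N.+1 t) *m invmx (hankelmx sh N.+1) *m bcolmx N.+1 t.
Proof. by rewrite /lambda -adjmxM -mulmxA Rmx_u2 adjmxN !mulNmx mulmxN opprK. Qed.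

Lemma sum_mDSM j : \sum_(k < j.+1) mDSM a b s k = mu a b s j.
Proof.
elim: j => [|j IH]; first by rewrite big_ord1.
by rewrite big_ord_recr IH /= addrC subrK.
Qed.

Lemma sum_lDSM j : \sum_(k < j.+1) lDSM a b s k = lambda a b s j.
Proof.
elim: j => [|j IH]; first by rewrite big_ord1.
by rewrite big_ord_recr IH /= addrC subrK.
Qed.

End EvaluationAtA.

Section DSMParameters.
Variables (C : numClosedFieldType) (q n : nat) (a b : C) (s : nat -> 'M[C]_q).
Hypotheses (a_real : a \is Num.real) (b_real : b \is Num.real).
Hypothesis herm_s : herm_upto s (n + n).+1.
Local Notation t := (bmom b s).
Local Notation sh := (shat a b s).
Hypothesis posK1 : posdef (hankelmx t n.+1).
Hypothesis posH2 : posdef (hankelmx sh n).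

Lemma herm_bmom N : (N <= n)%N -> herm_upto t (N + N).
Proof.
move=> hN k hk; rewrite /bmom adjmxB adjmxZ conj_Creal // !herm_s //; lia.
Qed.

Lemma herm_shat N : (N < n)%N -> herm_upto sh (N + N).
Proof.
move=> hN k hk; rewrite shat_amom; apply: adjmx_amom => //; apply: (herm_bmom (leqnn n)); lia.
Qed.

Lemma unitmx_hankel_bmom N : (N <= n.+1)%N -> hankelmx t N \in unitmx.
Proof. by move=> h; apply: posdef_unit; apply: posdef_hankelmx posK1 h. Qed.

Lemma unitmx_hankel_shat N : (N <= n)%N -> hankelmx sh N \in unitmx.
Proof. by move=> h; apply: posdef_unit; apply: posdef_hankelmx posH2 h. Qed.

Lemma mDSM_schur N : (N <= n)%N ->
  mDSM a b s N = adjmx (Gamma1 b s N a) *m invmx (hankel_schur t N) *m Gamma1 b s N a.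
Proof.
move=> hN; have := inv_hankelmx_quad_rec (herm_bmom hN)
  (unitmx_hankel_bmom (leqW hN)) (unitmx_hankel_bmom (hN : N.+1 <= n.+1)%N) (apow q a).
rewrite -mu_quad -Gamma1_opoly; case: N hN => [|N] hN e; rewrite /mDSM /= e.
  by rewrite bcolmx_nil adjmx0 !mul0mx add0r.
by rewrite -mu_quad addrC addKr.
Qed.

Lemma lDSM_schur N : (N < n)%N ->
  lDSM a b s N = adjmx (Q2 a b s N a) *m invmx (hankel_schur sh N) *m Q2 a b s N a.
Proof.
move=> hN; have := inv_hankelmx_quad_rec (herm_shat hN)
  (unitmx_hankel_shat (ltnW hN)) (unitmx_hankel_shat hN) t.
rewrite -lambda_quad -Q2_opoly; case: N hN => [|N] hN e; rewrite /lDSM /= e.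
  by rewrite bcolmx_nil adjmx0 !mul0mx add0r.
by rewrite -lambda_quad addrC addKr.
Qed.

Lemma opoly_shat_orth N : (N < n)%N -> forall k, (k < N)%N ->
  \sum_(l < N.+1) opoly_coef sh N l *m amom a t (l + k)%N = 0.
Proof.
move=> hN k kN; under eq_bigr do rewrite -shat_amom.
exact: opoly_orth (herm_shat hN) (unitmx_hankel_shat (ltnW hN)) _ kN.
Qed.

Lemma Gamma1_peval N : Gamma1 b s N a = peval a (opoly_coef t N) N.
Proof. by rewrite Gamma1_opoly opoly_rowE mul_browmx_apow. Qed.

Lemma Q2_moment N : Q2 a b s N a = \sum_(l < N.+1) opoly_coef sh N l *m t l.
Proof. by rewrite Q2_opoly opoly_rowE mul_browmx_bcolmx. Qed.

Lemma Q2_mul_adj_Gamma1 N : (N < n)%N ->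
  Q2 a b s N a *m adjmx (Gamma1 b s N a) = hankel_schur t N.
Proof.
move=> hN; have hN' := ltnW hN; have uK := unitmx_hankel_bmom (leqW hN').
rewrite Q2_moment Gamma1_peval (moment_mul_adj_peval a_real (opoly_coef_lead _ _)
  (opoly_orth (herm_bmom hN') uK) (opoly_shat_orth hN) (herm_bmom hN')).
by rewrite (opoly_norm (herm_bmom hN') uK) (adjmx_hankel_schur (herm_bmom hN')).
Qed.

Lemma Gamma1S_mul_adj_Q2 N : (N < n)%N ->
  Gamma1 b s N.+1 a *m adjmx (Q2 a b s N a) = - hankel_schur sh N.
Proof.
move=> hN; have uK := unitmx_hankel_bmom (ltnW (hN : N.+1 < n.+1)%N).
rewrite Q2_moment Gamma1_peval (peval_mul_adj_moment a_real (opoly_coef_lead _ _)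
  (opoly_orth (herm_bmom hN) uK) (opoly_shat_orth hN)); last first.
  by move=> k hk; apply: (herm_bmom (leqnn n)); lia.
congr (- _); rewrite -[RHS](adjmx_hankel_schur (herm_shat hN)).
rewrite -(opoly_norm (herm_shat hN) (unitmx_hankel_shat (ltnW hN))); congr adjmx.
by apply: eq_bigr => l _; rewrite shat_amom.
Qed.

Lemma P2_mu N : (N < n)%N -> P2 a b s N a = Q2 a b s N a *m mu a b s N.
Proof.
move=> hN; rewrite P2_opoly Q2_opoly mu_quad.
apply: (opoly_apow_factor a_real (shat_amom a b s) (herm_shat hN)).
  exact: unitmx_hankel_shat (ltnW hN).
exact: unitmx_hankel_bmom (leqW hN).
Qed.

Lemma Theta1_lambda N : (N < n)%N ->
  Theta1 b s N.+1 a = Gamma1 b s N.+1 a *m (s 0%N + lambda a b s N).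
Proof.
move=> hN; rewrite Theta1_opoly lambda_quad Gamma1_opoly.
apply: (opoly_cumsum_factor (shat_amom a b s) (s 0%N) (herm_bmom hN)).
  exact: unitmx_hankel_bmom (ltnW (hN : N.+1 < n.+1)%N).
exact: unitmx_hankel_shat hN.
Qed.

Lemma unitmx_hankel_schur_bmom N : (N <= n)%N -> hankel_schur t N \in unitmx.
Proof.
move=> hN; apply: unitmx_hankel_schur (herm_bmom hN) (unitmx_hankel_bmom (leqW hN)) _.
exact: unitmx_hankel_bmom (hN : N.+1 <= n.+1)%N.
Qed.

Lemma unitmx_hankel_schur_shat N : (N < n)%N -> hankel_schur sh N \in unitmx.
Proof.
move=> hN; apply: unitmx_hankel_schur (herm_shat hN) (unitmx_hankel_shat (ltnW hN)) _.
exact: unitmx_hankel_shat hN.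
Qed.

Lemma unitmx_Q2_Gamma1 N : (N < n)%N ->
  Q2 a b s N a \in unitmx /\ Gamma1 b s N a \in unitmx.
Proof.
move=> hN; have := unitmx_hankel_schur_bmom (ltnW hN).
by rewrite -(Q2_mul_adj_Gamma1 hN) unitmx_mul unitmx_adj => /andP.
Qed.

Lemma Q2_mul_mDSM N : (N < n)%N -> Q2 a b s N a *m mDSM a b s N = Gamma1 b s N a.
Proof.
move=> hN; rewrite (mDSM_schur (ltnW hN)) !mulmxA (Q2_mul_adj_Gamma1 hN).
by rewrite mulmxV ?mul1mx // (unitmx_hankel_schur_bmom (ltnW hN)).
Qed.

Lemma Gamma1S_mul_lDSM N : (N < n)%N -> Gamma1 b s N.+1 a *m lDSM a b s N = - Q2 a b s N a.
Proof.
move=> hN; rewrite (lDSM_schur hN) !mulmxA (Gamma1S_mul_adj_Q2 hN) mulNmx.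
by rewrite mulmxV ?mulNmx ?mul1mx // unitmx_hankel_schur_shat.
Qed.

Lemma unitmx_mDSM N : (N < n)%N -> mDSM a b s N \in unitmx.
Proof.
move=> hN; have [_ uG] := unitmx_Q2_Gamma1 hN.
by rewrite (mDSM_schur (ltnW hN)) !unitmx_mul unitmx_adj uG unitmx_inv
  (unitmx_hankel_schur_bmom (ltnW hN)).
Qed.

Lemma unitmx_lDSM N : (N < n)%N -> lDSM a b s N \in unitmx.
Proof.
move=> hN; have [uQ _] := unitmx_Q2_Gamma1 hN.
by rewrite (lDSM_schur hN) !unitmx_mul unitmx_adj uQ unitmx_inv unitmx_hankel_schur_shat.
Qed.

Lemma Q2_Gamma1 N : (N < n)%N -> Q2 a b s N a = Gamma1 b s N a *m invmx (mDSM a b s N).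
Proof. by move=> hN; rewrite -(Q2_mul_mDSM hN) mulmxK // unitmx_mDSM. Qed.

Lemma Gamma1_prodML N : (N <= n)%N -> Gamma1 b s N a = (-1) ^+ N *: prodML a b s N.
Proof.
elim: N => [|N IH] hN; first by rewrite expr0 scale1r.
have -> : Gamma1 b s N.+1 a = - (Q2 a b s N a *m invmx (lDSM a b s N)).
  by rewrite -mulNmx -(Gamma1S_mul_lDSM hN) mulmxK // unitmx_lDSM.
rewrite Q2_Gamma1 // (IH (ltnW hN)) [prodML _ _ _ N.+1]/= exprS -scalerA scaleN1r.
by rewrite -!scalemxAl !mulmxA.
Qed.

Lemma Q2_prodML N : (N < n)%N ->
  Q2 a b s N a = (-1) ^+ N *: (prodML a b s N *m invmx (mDSM a b s N)).
Proof. by move=> hN; rewrite Q2_Gamma1 // (Gamma1_prodML (ltnW hN)) -scalemxAl. Qed.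

Lemma P2_prodML N : (N < n)%N ->
  P2 a b s N a = (-1) ^+ N *: (prodML a b s N *m invmx (mDSM a b s N)
                                *m (\sum_(k < N.+1) mDSM a b s k)).
Proof. by move=> hN; rewrite P2_mu // Q2_prodML // sum_mDSM -scalemxAl. Qed.

Lemma Theta1_prodML N : (N < n)%N ->
  Theta1 b s N.+1 a = (-1) ^+ N.+1 *: (prodML a b s N.+1
                                   *m (s 0%N + \sum_(k < N.+1) lDSM a b s k)).
Proof. by move=> hN; rewrite Theta1_lambda // Gamma1_prodML // sum_lDSM -scalemxAl. Qed.

End DSMParameters.

Unset Implicit Arguments.

Theorem mainTheorem9 (C : numClosedFieldType) (q n : nat) (a b : C)
  (s : nat -> 'M[C]_q)
  (hq : (0 < q)%N) (hn : (0 < n)%N)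
  (ha : a \is Num.real) (hb : b \is Num.real) (hab : a < b)
  (hs : forall j, (j <= 2 * n + 1)%N -> s j \is hermsymmx)
  (hH1 : posdef (H1 s n))
  (hH2 : posdef (H2 a b s n.-1))
  (hK1 : posdef (K1 b s n))
  (hK2 : posdef (K2 a s n)) :
  (forall j, (j <= n.-1)%N ->
     Q2 a b s j a = (-1) ^+ j *: (prodML a b s j *m invmx (mDSM a b s j)))
  /\ (forall j, (1 <= j <= n)%N ->
     Gamma1 b s j a = (-1) ^+ j *: prodML a b s j)
  /\ (forall j, (1 <= j <= n.-1)%N ->
     P2 a b s j a = (-1) ^+ j *: (prodML a b s j *m invmx (mDSM a b s j)
                                   *m (\sum_(k < j.+1) mDSM a b s k)))
  /\ (forall j, (1 <= j <= n)%N ->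
     Theta1 b s j a = (-1) ^+ j *: (prodML a b s j
                                   *m (s 0%N + \sum_(k < j) lDSM a b s k))).
Proof.
have herm_s : herm_upto s (n + n).+1.
  by move=> k hk; apply: adjmx_herm; apply: hs; lia.
case: n hn hs herm_s hH1 hH2 hK1 hK2 => [//|n] _ _ herm_s _ posH2 posK1 _.
split; [|split; [|split]] => j.
- exact: Q2_prodML ha hb herm_s posK1 posH2 j.
- by case/andP => _; exact: Gamma1_prodML ha hb herm_s posK1 posH2 j.
- by case/andP => _; exact: P2_prodML ha hb herm_s posK1 posH2 j.
- by case: j => [//|j] /andP[_]; exact: Theta1_prodML ha hb herm_s posK1 posH2 j.
Qed.
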